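(* Let $\mathbb X,\mathbb H,\mathbb Y$ be separable real Hilbert spaces, $\mathbf W\colon\mathbb X\to\mathbb H$ and $\mathbf A\colon\mathbb H\to\mathbb Y$ bounded linear operators, $\mathcal R\colon\mathbb X\to[0,\infty]$ proper, convex and weakly lower semicontinuous, $(\phi_\lambda)_{\lambda\in\Lambda}$ an orthonormal basis of $\mathbb H$ indexed by a countable set $\Lambda$, and $(\kappa_\lambda)_{\lambda\in\Lambda}$ weights with $\kappa_\lambda\ge a>0$. Assume there is $x\in\mathbb X$ with $\mathcal R(x)+\|\mathbf W x\|_{1,\kappa}<\infty$. Suppose $(x_\star,y_\star)\in\mathbb X\times\mathbb Y$ satisfies: (2.1) $\mathbf A\mathbf W x_\star=y_\star$; (2.2) there is $\nu\in\mathbb Y$ with $\mathbf W^*\mathbf A^*\nu\in\partial\big(\mathcal R+\|\mathbf W(\cdot)\|_{1,\kappa}\big)(x_\star)$; (2.3) there exist $\xi\in\partial\mathcal R(x_\star)$ and $\eta\in\partial\|\cdot\|_{1,\kappa}(\mathbf W x_\star)$ with $\mathbf W^*\mathbf A^*\nu=\xi+\mathbf W^*\eta$; (2.4) $\mathbf A_{\Omega[\eta]}\colon\mathbb H_{\Omega[\eta]}\to\mathbb Y$ is injective. Let $C>0$. Then for every $\delta>0$, every $y^\delta\in\mathbb Y$ with $\|y^\delta-y_\star\|\le\delta$, $\alpha=C\delta$, and every minimizer $x_\alpha^\delta$ over $\mathbb X$ of $$\mathcal A_{\alpha,y^\delta}(x)=\tfrac12\|\mathbf A\mathbf W x-y^\delta\|^2+\alpha\big(\mathcal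 R(x)+\|\mathbf W x\|_{1,\kappa}\big),$$ we have $$\mathcal D^{\mathcal R}_\xi(x_\alpha^\delta,x_\star)\le c_{(\nu,\eta)}\,\delta,\qquad \|\mathbf W x_\alpha^\delta-\mathbf W x_\star\|\le d_{(\nu,\eta)}\,\delta,$$ where $$c_{(\nu,\eta)}=\frac{(1+C\|\nu\|)^2}{2C},\qquad d_{(\nu,\eta)}=2\|\mathbf A_{\Omega[\eta]}^{-1}\|\,(1+C\|\nu\|)+\frac{1+\|\mathbf A_{\Omega[\eta]}^{-1}\|\,\|\mathbf A\|}{m[\eta]}\,c_{(\nu,\eta)}.$$
   Context: Weighted $\ell^1$ norm: $\|h\|_{1,\kappa}=\sum_{\lambda\in\Lambda}\kappa_\lambda|\langle\phi_\lambda,h\rangle|\in[0,\infty]$ for $h\in\mathbb H$. Subdifferential: $\xi\in\partial\mathcal F(z_\star)$ iff $\mathcal F(z)\ge\mathcal F(z_\star)+\langle\xi,z-z_\star\rangle$ for all $z$. Bregman distance: for $\xi\in\partial\mathcal F(z_\star)$, $\mathcal D^{\mathcal F}_\xi(z,z_\star)=\mathcal F(z)-\mathcal F(z_\star)-\langle\xi,z-z_\star\rangle$. For $\eta=\sum_\lambda\eta_\lambda\phi_\lambda\in\partial\|\cdot\|_{1,\kappa}(h_\star)$ (which forces $|\eta_\lambda|\le\kappa_\lambda$ for all $\lambda$), set $\Omega[\eta]=\{\lambda\in\Lambda: |\eta_\lambda|=\kappa_\lambda\}$ (a finite set) and $m[\eta]=\min\{\kappa_\lambda-|\eta_\lambda|:\lambda\notin\Omega[\eta]\}>0$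 (with the term involving $1/m[\eta]$ read as $0$ if $\Lambda=\Omega[\eta]$). For finite $\Omega\subseteq\Lambda$: $\mathbb H_\Omega=\operatorname{span}\{\phi_\lambda:\lambda\in\Omega\}$, $\mathbf A_\Omega=\mathbf A|_{\mathbb H_\Omega}\colon\mathbb H_\Omega\to\mathbb Y$, and when $\mathbf A_\Omega$ is injective, $\|\mathbf A_\Omega^{-1}\|$ is the operator norm of its inverse $\operatorname{ran}(\mathbf A_\Omega)\to\mathbb H_\Omega$. *)

From HB Require Import structures.
From mathcomp Require Import all_boot all_order all_algebra.
From mathcomp Require Import all_classical all_reals all_analysis.
Set Implicit Arguments. Unset Strict Implicit. Unset Printing Implicit Defensive.
Import Order.TTheory GRing.Theory Num.Theory.
Import numFieldNormedType.Exports.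
Local Open Scope classical_set_scope.
Local Open Scope ring_scope.

(* A real inner product inducing the norm of V; together with completeness of
   V (completeNormedModType) this makes V a real Hilbert space. *)
Record is_inner_product (R : realType) (V : normedModType R) (ip : V -> V -> R)
  : Prop := {
  ip_sym : forall x y, ip x y = ip y x;
  ip_linl : forall (a : R) (x y z : V), ip (a *: x + y) z = a * ip x z + ip y z;
  ip_norm : forall x, ip x x = `|x| ^+ 2 }.

Definition separable (R : realType) (V : normedModType R) : Prop :=
  exists S : set V, countable S /\ closure S = setT.

Definition is_adjoint (R : realType) (U V : normedModType R)
  (ipU : U -> U -> R) (ipV : V -> V -> R) (T : U -> V) (Tt : V -> U) : Prop :=
  forall u v, ipV (T u) v = ipU u (Tt v).

Definition weakly_open (R : realType) (V : normedModType R) (ip : V -> V -> R)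
  (U : set V) : Prop :=
  forall x, U x -> exists (n : nat) (ys : nat -> V) (e : R), 0 < e /\
    forall z, (forall i, (i < n)%N -> `|ip (z - x) (ys i)| < e) -> U z.

Definition weakly_closed (R : realType) (V : normedModType R) (ip : V -> V -> R)
  (S : set V) : Prop := weakly_open ip (~` S).

Definition weakly_lsc (R : realType) (V : normedModType R) (ip : V -> V -> R)
  (F : V -> \bar R) : Prop :=
  forall t : \bar R, weakly_closed ip [set x | (F x <= t)%E].

Definition proper_fun (R : realType) (V : normedModType R) (F : V -> \bar R) : Prop :=
  (exists x, (F x < +oo)%E) /\ (forall x, (-oo < F x)%E).

Definition convex_fun (R : realType) (V : normedModType R) (F : V -> \bar R) : Prop :=
  forall (x y : V) (t : R), 0 < t -> t < 1 ->
    (F (t *: x + (1 - t) *: y)%R <= t%:E * F x + (1 - t)%:E * F y)%E.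

Definition subdiff (R : realType) (V : normedModType R) (ip : V -> V -> R)
  (F : V -> \bar R) (x0 xi : V) : Prop :=
  forall z, (F x0 + (ip xi (z - x0)%R)%:E <= F z)%E.

Definition bregman (R : realType) (V : normedModType R) (ip : V -> V -> R)
  (F : V -> \bar R) (xi z z0 : V) : \bar R :=
  (F z - F z0 - (ip xi (z - z0)%R)%:E)%E.

Definition orthonormal_basis (R : realType) (V : normedModType R) (ip : V -> V -> R)
  (L : countType) (phi : L -> V) : Prop :=
  (forall l m, ip (phi l) (phi m) = (if l == m then 1 else 0)) /\
  (forall h, (forall l, ip (phi l) h = 0) -> h = 0).

Definition wl1 (R : realType) (V : normedModType R) (ip : V -> V -> R)
  (L : countType) (phi : L -> V) (kappa : L -> R) (h : V) : \bar R :=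
  \esum_(l in [set: L]) (kappa l * `|ip (phi l) h|)%:E.

Definition Omega (R : realType) (V : normedModType R) (ip : V -> V -> R)
  (L : countType) (phi : L -> V) (kappa : L -> R) (eta : V) : set L :=
  [set l | `|ip (phi l) eta| = kappa l].

(* m[eta] = min { kappa_l - |eta_l| : l notin Omega[eta] } (written as inf) *)
Definition mgap (R : realType) (V : normedModType R) (ip : V -> V -> R)
  (L : countType) (phi : L -> V) (kappa : L -> R) (eta : V) : R :=
  inf [set kappa l - `|ip (phi l) eta| | l in ~` Omega ip phi kappa eta].

(* 1 / m[eta], read as 0 when Lambda = Omega[eta] *)
Definition inv_mgap (R : realType) (V : normedModType R) (ip : V -> V -> R)
  (L : countType) (phi : L -> V) (kappa : L -> R) (eta : V) : R :=
  if pselect (exists l, ~ Omega ip phi kappa eta l)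
  then 1 / mgap ip phi kappa eta else 0.

Definition span_of (R : realType) (V : normedModType R)
  (L : countType) (phi : L -> V) (Om : set L) : set V :=
  [set h | exists (s : seq L) (c : L -> R),
     (forall l, l \in s -> Om l) /\ h = \sum_(l <- s) c l *: phi l].

Definition injective_on (R : realType) (U V : normedModType R) (A : U -> V)
  (S : set U) : Prop :=
  forall h1 h2, S h1 -> S h2 -> A h1 = A h2 -> h1 = h2.

Definition opnorm (R : realType) (U V : normedModType R) (A : U -> V) : R :=
  sup [set `|A h| | h in [set h : U | `|h| <= 1]].

(* operator norm of the inverse of A|_S : S -> A(S), i.e.
   sup { ||A_S^{-1} y|| : y in ran(A_S), ||y|| <= 1 } *)
Definition inv_opnorm (R : realType) (U V : normedModType R) (A : U -> V)
  (S : set U) : R :=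
  sup [set `|h| | h in [set h : U | S h /\ `|A h| <= 1]].

From HB Require Import structures.
From mathcomp Require Import all_boot all_order all_algebra.
From mathcomp Require Import all_classical all_reals all_analysis.
From mathcomp Require Import ring lra.
Set Implicit Arguments. Unset Strict Implicit. Unset Printing Implicit Defensive.
Import Order.TTheory GRing.Theory Num.Theory.
Import numFieldNormedType.Exports.
Local Open Scope classical_set_scope.
Local Open Scope ring_scope.

(* Testing the minimality of x_alpha^delta against x_star and rewriting the
   penalty difference with the source condition W* A* nu = xi + W* eta gives
     1/2 r^2 + alpha (D_R + D_1) <= 1/2 delta^2 + alpha |nu| (r + delta),
   where r = |A W x_alpha^delta - y^delta| and D_R, D_1 are the Bregman
   distances of R (at xi) and of the weighted l1 norm (at eta).  Completing the
   square with alpha = C delta bounds D_R + D_1 by c delta and r by a multiple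
   of delta.  For the error u - u_star in H (u = W x_alpha^delta): off the
   finite set Omega[eta] the coordinates of u_star vanish and the subgradient
   inequality has slack kappa_l - |eta_l| >= m[eta], so that part of u - u_star
   has norm at most D_1 / m[eta]; on Omega[eta] the restriction of A is
   injective on a finite-dimensional space, hence boundedly invertible, and
   |A (u - u_star)| <= r + delta. *)

Section InnerProduct.
Variables (R : realType) (V : normedModType R) (ip : V -> V -> R).
Hypothesis hip : is_inner_product ip.

Lemma ipDl x y z : ip (x + y) z = ip x z + ip y z.
Proof. by have := ip_linl hip 1 x y z; rewrite scale1r mul1r. Qed.

Lemma ip0l z : ip 0 z = 0.
Proof.
have := ip_linl hip 1 0 0 z; rewrite scale1r addr0 mul1r => e.
by apply: (addrI (ip 0 z)); rewrite addr0 -e.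
Qed.

Lemma ipZl (r : R) x z : ip (r *: x) z = r * ip x z.
Proof. by have := ip_linl hip r x 0 z; rewrite !addr0 ip0l addr0. Qed.

Lemma ipNl x z : ip (- x) z = - ip x z.
Proof. by rewrite -scaleN1r ipZl mulN1r. Qed.

Lemma ipBl x y z : ip (x - y) z = ip x z - ip y z.
Proof. by rewrite ipDl ipNl. Qed.

Lemma ipDr x y z : ip z (x + y) = ip z x + ip z y.
Proof. by rewrite !(ip_sym hip z) ipDl. Qed.

Lemma ipZr (r : R) x z : ip z (r *: x) = r * ip z x.
Proof. by rewrite !(ip_sym hip z) ipZl. Qed.

Lemma ip0r z : ip z 0 = 0.
Proof. by rewrite (ip_sym hip) ip0l. Qed.

Lemma ipBr x y z : ip z (x - y) = ip z x - ip z y.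
Proof. by rewrite !(ip_sym hip z) ipBl. Qed.

Lemma ip_suml (I : Type) (s : seq I) (P : pred I) (F : I -> V) z :
  ip (\sum_(i <- s | P i) F i) z = \sum_(i <- s | P i) ip (F i) z.
Proof.
elim: s => [|i s IH]; first by rewrite !big_nil ip0l.
by rewrite !big_cons; case: (P i); rewrite ?ipDl IH.
Qed.

Lemma ip_sumr (I : Type) (s : seq I) (P : pred I) (F : I -> V) z :
  ip z (\sum_(i <- s | P i) F i) = \sum_(i <- s | P i) ip z (F i).
Proof. by rewrite (ip_sym hip) ip_suml; apply: eq_bigr => i _; rewrite ip_sym. Qed.

Lemma cauchy_schwarz x y : `|ip x y| <= `|x| * `|y|.
Proof.
have [->|y0] := eqVneq y 0; first by rewrite ip0r !normr0 mulr0.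
have ny : 0 < `|y| ^+ 2 by rewrite exprn_gt0 // normr_gt0.
(* 0 <= |x + t y|^2 at the minimizing t = - <x,y> / |y|^2 *)
pose t := - (ip x y / `|y| ^+ 2).
have e : `|x| ^+ 2 * `|y| ^+ 2 - ip x y ^+ 2 = `|x + t *: y| ^+ 2 * `|y| ^+ 2.
  rewrite /t -!(ip_norm hip) ipDl !ipDr !ipZl !ipZr (ip_sym hip y x).
  by field; rewrite (ip_norm hip) gt_eqF.
have h : ip x y ^+ 2 <= (`|x| * `|y|) ^+ 2.
  by rewrite exprMn -subr_ge0 e mulr_ge0 // sqr_ge0.
by rewrite -(ler_pXn2r (_ : 0 < 2)%N) ?nnegrE ?mulr_ge0 // real_normK ?num_real.
Qed.

Lemma cvg_ipr (u : nat -> V) (v w : V) :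
  u @ \oo --> v -> (fun n => ip w (u n)) @ \oo --> ip w v.
Proof.
move=> uv; have [->|w0] := eqVneq w 0.
  by rewrite ip0l; apply: cvg_near_cst; near=> n; rewrite ip0l.
have nw : 0 < `|w| by rewrite normr_gt0.
apply/cvgrPdist_lt => e e0.
have uv_near := (cvgrPdist_lt _ _).1 uv (e / `|w|) (divr_gt0 e0 nw).
near=> n; rewrite -ipBr; apply: le_lt_trans (cauchy_schwarz _ _) _.
rewrite mulrC -ltr_pdivlMr //; near: n; exact: uv_near.
Unshelve. all: by end_near. Qed.

End InnerProduct.

Section OrthonormalBasis.
Variables (R : realType) (V : normedModType R) (ip : V -> V -> R).
Hypothesis hip : is_inner_product ip.
Variables (L : countType) (phi : L -> V).
Hypothesis onb : orthonormal_basis ip phi.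

Lemma ip_phi l m : ip (phi l) (phi m) = (if l == m then 1 else 0).
Proof. by case: onb => h _; apply: h. Qed.

Lemma normr_phi l : `|phi l| = 1.
Proof.
have := ip_norm hip (phi l); rewrite ip_phi eqxx => /esym/eqP.
by rewrite -[X in _ == X](expr1n _ 2%N) eqrXn2 ?ler01 // => /eqP.
Qed.

Lemma ip_phi_sum_notin (s : seq L) (c : L -> R) m : m \notin s ->
  ip (phi m) (\sum_(l <- s) c l *: phi l) = 0.
Proof.
move=> ms; rewrite (ip_sumr hip) big_seq big1 // => l ls.
rewrite (ipZr hip) ip_phi; case: eqP => [ml|_]; last by rewrite mulr0.
by move: ms; rewrite ml ls.
Qed.

Lemma ip_phi_sum (s : seq L) (c : L -> R) m : uniq s ->
  ip (phi m) (\sum_(l <- s) c l *: phi l) = if m \in s then c m else 0.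
Proof.
elim: s => [|l s IH]; first by rewrite big_nil (ip0r hip).
move=> /= /andP[ls us]; rewrite big_cons (ipDr hip) (ipZr hip) ip_phi in_cons IH //.
have [->|ml] := eqVneq m l; first by rewrite mulr1 (negbTE ls) addr0.
by rewrite mulr0 add0r.
Qed.

Lemma onb_coord_inj v w : (forall l, ip (phi l) v = ip (phi l) w) -> v = w.
Proof.
move=> h; apply/eqP; rewrite -subr_eq0; apply/eqP.
by case: onb => _; apply => l; rewrite (ipBr hip) h subrr.
Qed.

Definition coord_proj (s : seq L) (x : V) : V := \sum_(l <- s) ip (phi l) x *: phi l.

Lemma ip_phi_coord_proj (s : seq L) x m : uniq s ->
  ip (phi m) (coord_proj s x) = if m \in s then ip (phi m) x else 0.
Proof. exact: ip_phi_sum. Qed.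

Lemma bessel (s : seq L) x : uniq s ->
  \sum_(l <- s) ip (phi l) x ^+ 2 <= `|x| ^+ 2.
Proof.
move=> us; set p := coord_proj s x.
have e1 : ip x p = \sum_(l <- s) ip (phi l) x ^+ 2.
  rewrite /p /coord_proj (ip_sumr hip); apply: eq_bigr => l _.
  by rewrite (ipZr hip) (ip_sym hip) expr2.
have e2 : ip p p = \sum_(l <- s) ip (phi l) x ^+ 2.
  rewrite {1}/p /coord_proj (ip_suml hip) big_seq [RHS]big_seq.
  by apply: eq_bigr => l ls; rewrite (ipZl hip) ip_phi_coord_proj // ls expr2.
have := ip_norm hip (x - p).
rewrite (ipBl hip) !(ipBr hip) (ip_sym hip p x) e1 e2 (ip_norm hip) => e.
have : 0 <= `|x - p| ^+ 2 by apply: sqr_ge0.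
rewrite -e; lra.
Qed.

(* By Bessel, at most |x|^2 / eps^2 coordinates of x exceed eps. *)
Lemma onb_large_coord_finite x (eps : R) : 0 < eps ->
  exists s : seq L, uniq s /\ forall l, eps <= `|ip (phi l) x| -> l \in s.
Proof.
move=> e0.
pose P n := `[< exists s : seq L, [/\ uniq s, size s = n &
   forall l, l \in s -> eps <= `|ip (phi l) x| ] >].
have P0 : exists n, P n by exists 0%N; apply/asboolP; exists [::].
have ub n : P n -> (n <= Num.bound (`|x| ^+ 2 / eps ^+ 2))%N.
  move=> /asboolP [s [us <- hs]].
  have : (size s)%:R * eps ^+ 2 <= `|x| ^+ 2.
    apply: le_trans (bessel x us).
    rewrite -sum1_size natr_sum mulr_suml big_seq [leRHS]big_seq.
    apply: ler_sum => l ls; rewrite mul1r -[leRHS]real_normK ?num_real //.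
    by rewrite ler_pXn2r ?nnegrE ?(ltW e0) ?normr_ge0 ?hs.
  move=> h; rewrite -(ler_nat R); apply: ltW.
  apply: le_lt_trans (archi_boundP _); last by rewrite divr_ge0 // sqr_ge0.
  by rewrite ler_pdivlMr ?exprn_gt0.
case: (ex_maxnP P0 ub) => n /asboolP [s [us sz hs]] mx.
exists s; split => // l hl; case ls: (l \in s) => //.
have : P (size (l :: s)).
  apply/asboolP; exists (l :: s); split => //=; first by rewrite ls.
  by move=> m; rewrite in_cons => /orP [/eqP -> | /hs].
by move/mx; rewrite /= sz ltnn.
Qed.

End OrthonormalBasis.

Section CompleteOrthonormalBasis.
Variables (R : realType) (V : completeNormedModType R) (ip : V -> V -> R).
Hypothesis hip : is_inner_product ip.
Variables (L : countType) (phi : L -> V).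
Hypothesis onb : orthonormal_basis ip phi.

(* The coordinate series converges absolutely, so by completeness it has a
   limit of norm at most E, and that limit has the coordinates of g. *)
Lemma norm_le_sum_coord g (E : R) :
  (forall s : seq L, uniq s -> \sum_(l <- s) `|ip (phi l) g| <= E) -> `|g| <= E.
Proof.
move=> hE.
pose c l := ip (phi l) g.
pose t k : V := oapp (fun l => c l *: phi l) 0 (@pickle_inv L k).
pose sn n := pmap (@pickle_inv L) (iota 0 n).
have usn n : uniq (sn n) by apply: (pmap_uniq (@pickle_invK L)); apply: iota_uniq.
have St n : series t n = \sum_(l <- sn n) c l *: phi l.
  by rewrite /series /= /sn big_pmap /index_iota subn0.
have Nt n : [normed series t] n = \sum_(l <- sn n) `|c l|.
  rewrite /= /sn big_pmap /series /= /index_iota subn0; apply: eq_bigr => k _.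
  rewrite /t; case: (pickle_inv k) => [l|] /=; last by rewrite normr0.
  by rewrite normrZ (normr_phi hip onb) mulr1.
have ncvg : cvgn [normed series t].
  apply: nondecreasing_is_cvgn.
    by apply: nondecreasing_series => n _ _; apply: normr_ge0.
  by exists E => _ [n _ <-]; rewrite Nt; apply: hE.
have scvg : series t @ \oo --> limn (series t) := normed_cvg ncvg.
suff -> : g = limn (series t).
  apply: le_trans (lim_series_norm ncvg) _.
  by apply: limr_le => //; near=> n; rewrite Nt; apply: hE.
apply: (onb_coord_inj hip onb) => m.
have cst : (fun n => ip (phi m) (series t n)) @ \oo --> c m.
  apply: cvg_near_cst; near=> n.
  rewrite St (ip_phi_sum hip onb) //; suff -> : m \in sn n by [].
  rewrite (can2_mem_pmap (@pickle_invK L) (@pickleK_inv L)) mem_iota add0n /=.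
  by near: n; exists (pickle m).+1 => // k.
have lim_coord := cvg_ipr hip (w := phi m) scvg.
exact: (cvg_unique _ cst lim_coord).
Unshelve. all: by end_near. Qed.

End CompleteOrthonormalBasis.

Section FreeFamily.
Variables (R : realType) (Y : normedModType R) (ip : Y -> Y -> R).
Hypothesis hip : is_inner_product ip.

(* The Gram matrix of a free family is invertible; its inverse recovers the
   coefficients of a combination from the inner products with the family. *)
Lemma free_coef_bound (k : nat) (w : 'I_k -> Y) :
  (forall c : 'I_k -> R, \sum_i c i *: w i = 0 -> forall i, c i = 0) ->
  exists K : R, forall c : 'I_k -> R, \sum_i `|c i| <= K * `|\sum_i c i *: w i|.
Proof.
move=> wfree.
pose G : 'M[R]_k := \matrix_(i, j) ip (w i) (w j).
have vG (v : 'rV[R]_k) j : (v *m G) 0 j = ip (\sum_i v 0 i *: w i) (w j).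
  by rewrite mxE (ip_suml hip); apply: eq_bigr => i _; rewrite mxE (ipZl hip).
have kerG (v : 'rV[R]_k) : v *m G = 0 -> v = 0.
  move=> vG0; have comb0 : \sum_i v 0 i *: w i = 0.
    apply/eqP; rewrite -normr_eq0 -sqrf_eq0 -(ip_norm hip) (ip_sumr hip).
    by apply/eqP/big1 => j _; rewrite (ipZr hip) -vG vG0 mxE mulr0.
  by apply/rowP => i; rewrite mxE (wfree _ comb0 i).
have uG : G \in unitmx.
  rewrite -row_free_unit -kermx_eq0; apply/eqP/row_matrixP => i.
  by rewrite row0; apply: kerG; rewrite -row_mul mulmx_ker row0.
exists (\sum_i \sum_j `|w j| * `|invmx G j i|) => c.
pose v : 'rV[R]_k := \row_i c i.
have vc : \sum_i v 0 i *: w i = \sum_i c i *: w i.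
  by apply: eq_bigr => i _; rewrite mxE.
rewrite mulr_suml; apply: ler_sum => i _.
have -> : c i = ((v *m G) *m invmx G) 0 i by rewrite mulmxK // mxE.
rewrite mxE mulr_suml; apply: le_trans (ler_norm_sum _ _ _) _.
apply: ler_sum => j _; rewrite normrM vG vc mulrAC; apply: ler_wpM2r => //.
by rewrite mulrC; apply: cauchy_schwarz.
Qed.

Lemma free_coef_bound_seq (I : eqType) (s : seq I) (w : I -> Y) : uniq s ->
  (forall c : I -> R, \sum_(l <- s) c l *: w l = 0 -> forall l, l \in s -> c l = 0) ->
  exists K : R, forall c : I -> R,
    \sum_(l <- s) `|c l| <= K * `|\sum_(l <- s) c l *: w l|.
Proof.
move=> us wfree; pose t := tnth (in_tuple s).
have tinj i j : (t i == t j) = (i == j).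
  by rewrite /t !(tnth_nth (t i)) /= nth_uniq.
have [|K hK] := @free_coef_bound (size s) (fun i => w (t i)).
  move=> c hc i; pose c' l := \sum_(j | t j == l) c j.
  have c't j : c' (t j) = c j.
    by rewrite /c' (eq_bigl (pred1 j)) ?big_pred1_eq // => k; rewrite tinj.
  have : \sum_(l <- s) c' l *: w l = 0.
    by rewrite big_tnth -[RHS]hc; apply: eq_bigr => j _; rewrite c't.
  by move/wfree => /(_ (t i)); rewrite c't; apply; rewrite mem_tnth.
by exists K => c; rewrite !(big_tnth _ _ s); apply: hK.
Qed.

End FreeFamily.

Section OperatorNorm.
Variables (R : realType) (U V : normedModType R) (A : {linear U -> V}).
Hypothesis Acont : continuous A.

Lemma opnorm_ub h : `|h| <= 1 -> `|A h| <= opnorm A.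
Proof.
move=> h1; apply: ub_le_sup; last by exists h.
have /linear_boundedP /pinfty_ex_gt0 [r r0 hr] :=
  (linear_bounded_continuous A).2 Acont.
exists r => _ [u /= u1 <-]; apply: le_trans (hr u) _.
by rewrite -[leRHS]mulr1 ler_wpM2l // ltW.
Qed.

Lemma opnorm_ge0 : 0 <= opnorm A.
Proof. by apply: le_trans (opnorm_ub (h := 0) _); rewrite ?linear0 normr0. Qed.

Lemma normr_le_opnorm g : `|A g| <= opnorm A * `|g|.
Proof.
have [->|g0] := eqVneq g 0; first by rewrite linear0 !normr0 mulr0.
have ng : 0 < `|g| by rewrite normr_gt0.
have := opnorm_ub (h := `|g|^-1 *: g).
rewrite linearZ !normrZ ger0_norm ?invr_ge0 // mulVf ?gt_eqF // lexx.
by move=> /(_ isT); rewrite ler_pdivrMl // mulrC.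
Qed.

End OperatorNorm.

Section SpanOfBasisVectors.
Variables (R : realType) (H Y : normedModType R).
Variables (ipH : H -> H -> R) (ipY : Y -> Y -> R).
Hypotheses (hipH : is_inner_product ipH) (hipY : is_inner_product ipY).
Variables (L : countType) (phi : L -> H).
Hypothesis onb : orthonormal_basis ipH phi.
Variables (Om : set L) (sO : seq L).
Hypotheses (usO : uniq sO) (memO : forall l, Om l <-> l \in sO).
Variable A : {linear H -> Y}.
Hypothesis Ainj : injective_on A (span_of phi Om).

Lemma span0 : span_of phi Om 0.
Proof. by exists [::], (fun _ => 0); rewrite big_nil. Qed.

Lemma spanZ (r : R) v : span_of phi Om v -> span_of phi Om (r *: v).
Proof.
move=> [s [c [hs ->]]]; exists s, (fun l => r * c l); split => //.
by rewrite scaler_sumr; apply: eq_bigr => l _; rewrite scalerA.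
Qed.

Lemma span_coord_proj v : span_of phi Om v -> coord_proj ipH phi sO v = v.
Proof.
move=> hv; apply: (onb_coord_inj hipH onb) => m.
rewrite (ip_phi_coord_proj hipH onb) //; case: ifP => // mO.
move: hv => [s [c [hs ->]]]; apply/esym/(ip_phi_sum_notin hipH onb).
by apply/negP => /hs /memO; rewrite mO.
Qed.

Lemma span_inj0 v : span_of phi Om v -> A v = 0 -> v = 0.
Proof. by move=> hv Av; apply: Ainj => //; [exact: span0 | rewrite linear0]. Qed.

Lemma span_inv_bound : exists K : R, forall v, span_of phi Om v -> `|v| <= K * `|A v|.
Proof.
have [|K hK] := free_coef_bound_seq hipY (w := fun l => A (phi l)) usO.
  move=> c hc l ls; pose p := \sum_(l <- sO) c l *: phi l.
  have sp : span_of phi Om p by exists sO, c; split => // m /memO.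
  have Ap : A p = 0.
    by rewrite linear_sum -[RHS]hc; apply: eq_bigr => m _; rewrite linearZ.
  have /(congr1 (ipH (phi l))) := span_inj0 sp Ap.
  by rewrite (ip0r hipH) (ip_phi_sum hipH onb) // ls.
exists K => v hv; rewrite -{1}(span_coord_proj hv) /coord_proj.
apply: le_trans (ler_norm_sum _ _ _) _.
under eq_bigr do rewrite normrZ (normr_phi hipH onb) mulr1.
apply: le_trans (hK _) _; rewrite -[in leRHS](span_coord_proj hv) linear_sum.
by under [in leRHS]eq_bigr do rewrite linearZ.
Qed.

Lemma inv_opnorm_ub h : span_of phi Om h -> `|A h| <= 1 ->
  `|h| <= inv_opnorm A (span_of phi Om).
Proof.
move=> sh h1; apply: ub_le_sup; last by exists h.
have [K hK] := span_inv_bound.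
exists (Num.max K 0) => _ [u /= [su u1] <-]; apply: le_trans (hK u su) _.
have := normr_ge0 (A u).
by case: (lerP K 0) => hk0; rewrite ?max_r ?max_l ?(ltW hk0) //; nra.
Qed.

Lemma inv_opnorm_ge0 : 0 <= inv_opnorm A (span_of phi Om).
Proof. by apply: le_trans (inv_opnorm_ub span0 _); rewrite ?linear0 normr0. Qed.

Lemma normr_le_inv_opnorm v : span_of phi Om v ->
  `|v| <= inv_opnorm A (span_of phi Om) * `|A v|.
Proof.
move=> hv; have [Av0|Av] := eqVneq (A v) 0.
  by rewrite Av0 (span_inj0 hv Av0) !normr0 mulr0.
have nA : 0 < `|A v| by rewrite normr_gt0.
have := inv_opnorm_ub (spanZ (`|A v|^-1) hv).
rewrite linearZ !normrZ ger0_norm ?invr_ge0 // mulVf ?gt_eqF // lexx.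
by move=> /(_ isT); rewrite ler_pdivrMl // mulrC.
Qed.

End SpanOfBasisVectors.

Section WeightedL1.
Variables (R : realType) (H : normedModType R) (ip : H -> H -> R).
Hypothesis hip : is_inner_product ip.
Variables (L : countType) (phi : L -> H).
Hypothesis onb : orthonormal_basis ip phi.
Variables (kappa : L -> R) (a : R).
Hypotheses (a_gt0 : 0 < a) (kappa_ge : forall l, a <= kappa l).
Local Notation wl := (wl1 ip phi kappa).

Lemma kappa_gt0 l : 0 < kappa l.
Proof. exact: lt_le_trans a_gt0 (kappa_ge l). Qed.

Lemma wl1_term_ge0 h l : (0 <= (kappa l * `|ip (phi l) h|)%:E)%E.
Proof. by rewrite lee_fin mulr_ge0 // ltW // kappa_gt0. Qed.

Lemma wl1_ge0 h : (0 <= wl h)%E.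
Proof. by apply: esum_ge0 => l _; apply: wl1_term_ge0. Qed.

Lemma wl1_0 : wl 0 = 0%E.
Proof. by apply: esum1 => l _; rewrite (ip0r hip) normr0 mulr0. Qed.

Lemma wl1_split h s : uniq s -> wl h =
  (\esum_(l in ~` [set` s]) (kappa l * `|ip (phi l) h|)%:E
   + (\sum_(l <- s) kappa l * `|ip (phi l) h|)%:E)%E.
Proof.
move=> us; rewrite /wl1 (esumID [set` s]) => [|l _]; last exact: wl1_term_ge0.
rewrite !setTI addeC; congr (_ + _)%E.
rewrite esum_fset => [| |l _]; last exact: wl1_term_ge0.
- by rewrite -fsbig_seq // sumEFin.
- exact: finite_seq.
Qed.

Lemma wl1_change_coords h h' s : uniq s ->
  (forall l, l \notin s -> ip (phi l) h = ip (phi l) h') ->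
  wl h \is a fin_num ->
  wl h' = (fine (wl h) - \sum_(l <- s) kappa l * `|ip (phi l) h|
           + \sum_(l <- s) kappa l * `|ip (phi l) h'|)%:E.
Proof.
move=> us hh'; rewrite (wl1_split h us) (wl1_split h' us).
have -> : \esum_(l in ~` [set` s]) (kappa l * `|ip (phi l) h'|)%:E =
          \esum_(l in ~` [set` s]) (kappa l * `|ip (phi l) h|)%:E.
  by apply: eq_esum => l /= ls; rewrite hh' //; apply/negP.
set E := esum _ _ => fin.
have fE : E \is a fin_num by move: fin; rewrite fin_numD => /andP[].
by rewrite -(fineK fE) -!EFinD /=; congr (_%:E); ring.
Qed.

Lemma subdiff_wl1_fin u0 eta : subdiff ip wl u0 eta -> wl u0 \is a fin_num.
Proof.
by move=> /(_ 0); rewrite wl1_0; move: (wl1_ge0 u0); case: (wl u0).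
Qed.

(* The subgradient inequality tested against u perturbed by d along finitely
   many basis vectors. *)
Lemma subdiff_wl1_coord u0 eta u s (d : L -> R) : subdiff ip wl u0 eta -> uniq s ->
  wl u \is a fin_num ->
  fine (wl u0) + ip eta (u - u0) + \sum_(l <- s) d l * ip (phi l) eta <=
  fine (wl u) + \sum_(l <- s) kappa l * (`|ip (phi l) u + d l| - `|ip (phi l) u|).
Proof.
move=> hs us fu; have f0 := subdiff_wl1_fin hs.
set z := u + \sum_(l <- s) d l *: phi l.
have hz l : l \notin s -> ip (phi l) u = ip (phi l) z.
  by move=> ls; rewrite /z (ipDr hip) (ip_phi_sum_notin hip onb) // addr0.
have := hs z; rewrite (wl1_change_coords us hz fu) -(fineK f0) -EFinD lee_fin.
have -> : ip eta (z - u0) = ip eta (u - u0) + \sum_(l <- s) d l * ip (phi l) eta.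
  rewrite /z addrAC [LHS](ipDr hip) (ip_sumr hip); congr (_ + _).
  by apply: eq_bigr => l _; rewrite (ipZr hip) (ip_sym hip).
rewrite addrA => h; apply: le_trans h _.
rewrite -addrA lerD2l addrC -sumrB big_seq [leRHS]big_seq.
apply: ler_sum => l ls; rewrite /z (ipDr hip) (ip_phi_sum hip onb) // ls.
by rewrite mulrBr.
Qed.

End WeightedL1.

Section WeightedL1Subgradient.
Variables (R : realType) (H : completeNormedModType R) (ip : H -> H -> R).
Hypothesis hip : is_inner_product ip.
Variables (L : countType) (phi : L -> H).
Hypothesis onb : orthonormal_basis ip phi.
Variables (kappa : L -> R) (a : R).
Hypotheses (a_gt0 : 0 < a) (kappa_ge : forall l, a <= kappa l).
Variables (us eta : H).
Hypothesis hsub : subdiff ip (wl1 ip phi kappa) us eta.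
Local Notation wl := (wl1 ip phi kappa).
Local Notation Om := (Omega ip phi kappa eta).
Local Notation et l := (ip (phi l) eta).

Lemma subgrad_coord_le l : `|et l| <= kappa l.
Proof.
have := subdiff_wl1_coord hip onb a_gt0 kappa_ge (u := us) (s := [:: l])
  (fun _ => et l) hsub isT (subdiff_wl1_fin hip a_gt0 kappa_ge hsub).
rewrite subrr (ip0r hip) addr0 !big_cons !big_nil !addr0 lerD2l => h.
have k0 := kappa_gt0 a_gt0 kappa_ge l.
have h2 : `|et l| ^+ 2 <= kappa l * `|et l|.
  rewrite real_normK ?num_real // expr2; apply: le_trans h _.
  by rewrite ler_wpM2l ?(ltW k0) // lerBlDl ler_normD.
have := normr_ge0 (et l); nra.
Qed.

Lemma gap_gt0 l : ~ Om l -> 0 < kappa l - `|et l|.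
Proof.
move=> nO; rewrite subr_gt0 lt_neqAle subgrad_coord_le andbT; apply/eqP => e.
by apply: nO; rewrite /Omega /= e.
Qed.

Lemma coord_off_Omega l : ~ Om l -> ip (phi l) us = 0.
Proof.
move=> nO; have := subdiff_wl1_coord hip onb a_gt0 kappa_ge (u := us) (s := [:: l])
  (fun _ => - ip (phi l) us) hsub isT (subdiff_wl1_fin hip a_gt0 kappa_ge hsub).
rewrite subrr (ip0r hip) addr0 !big_cons !big_nil !addr0 lerD2l subrr normr0 sub0r.
move=> h; have lt := gap_gt0 nO.
have h2 : kappa l * `|ip (phi l) us| <= `|ip (phi l) us| * `|et l|.
  by rewrite -normrM; apply: le_trans (ler_norm _); lra.
apply/normr0_eq0/le_anti/andP; split => //.
have := normr_ge0 (ip (phi l) us); have := normr_ge0 (et l); nra.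
Qed.

Lemma Omega_seq : exists sO : seq L, uniq sO /\ forall l, Om l <-> l \in sO.
Proof.
have [s [us' hs]] := onb_large_coord_finite hip onb eta a_gt0.
exists [seq l <- s | `[< Om l >]]; split; first exact: filter_uniq.
move=> l; rewrite mem_filter; split; last by move=> /andP[/asboolP].
by move=> hO; rewrite hs ?hO ?andbT; [apply/asboolP | apply: kappa_ge].
Qed.

(* Only the finitely many l with |eta_l| >= a/2 can have a gap below a/2. *)
Lemma gap_lbound : exists2 e, 0 < e & forall l, ~ Om l -> e <= kappa l - `|et l|.
Proof.
have a2 : 0 < a / 2 by rewrite divr_gt0.
have [s [_ hs]] := onb_large_coord_finite hip onb eta a2.
have [e e0 he] : exists2 e, 0 < e &
    forall l, l \in s -> ~ Om l -> e <= kappa l - `|et l|.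
  elim: s {hs} => [|l s [e e0 he]]; first by exists 1.
  have [hl|hl] := pselect (Om l).
    by exists e => // m; rewrite in_cons => /orP [/eqP -> //| ]; apply: he.
  exists (Num.min e (kappa l - `|et l|)); first by rewrite lt_min e0 gap_gt0.
  move=> m; rewrite in_cons => /orP [/eqP -> _ | ms nm]; first by rewrite ge_min lexx orbT.
  by rewrite ge_min he.
exists (Num.min e (a / 2)); first by rewrite lt_min e0 a2.
move=> l nl; rewrite ge_min; case ls: (l \in s); first by rewrite he.
have /negP : ~ (a / 2 <= `|et l|) by move=> /hs; rewrite ls.
rewrite -ltNge => h; have := kappa_ge l => ka; apply/orP; right; lra.
Qed.

Lemma mgap_le l : ~ Om l -> mgap ip phi kappa eta <= kappa l - `|et l|.
Proof.
move=> nl; apply: ge_inf; last by exists l.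
by have [e _ he] := gap_lbound; exists e => _ [m nm <-]; apply: he.
Qed.

Lemma mgap_gt0 : (exists l, ~ Om l) -> 0 < mgap ip phi kappa eta.
Proof.
move=> [l0 nl0]; have [e e0 he] := gap_lbound.
apply: lt_le_trans e0 _; apply: lb_le_inf; first by exists (kappa l0 - `|et l0|), l0.
by move=> _ [l nl <-]; apply: he.
Qed.

Lemma inv_mgap_ge0 : 0 <= inv_mgap ip phi kappa eta.
Proof.
by rewrite /inv_mgap; case: pselect => // ex; rewrite divr_ge0 ?ltW ?mgap_gt0.
Qed.

Lemma bregman_wl1_ge_gap u s : uniq s -> (forall l, l \in s -> ~ Om l) ->
  wl u \is a fin_num ->
  \sum_(l <- s) (kappa l - `|et l|) * `|ip (phi l) u| <=
  fine (wl u) - fine (wl us) - ip eta (u - us).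
Proof.
move=> uq hs fu.
have := subdiff_wl1_coord hip onb a_gt0 kappa_ge (fun l => - ip (phi l) u) hsub uq fu.
have -> : \sum_(l <- s) kappa l * (`|ip (phi l) u + - ip (phi l) u| - `|ip (phi l) u|)
    = - \sum_(l <- s) kappa l * `|ip (phi l) u|.
  by rewrite -sumrN; apply: eq_bigr => l _; rewrite subrr normr0 sub0r mulrN.
have -> : \sum_(l <- s) - ip (phi l) u * et l = - \sum_(l <- s) ip (phi l) u * et l.
  by rewrite -sumrN; apply: eq_bigr => l _; rewrite mulNr.
move=> h.
have : \sum_(l <- s) (kappa l - `|et l|) * `|ip (phi l) u| <=
   \sum_(l <- s) kappa l * `|ip (phi l) u| - \sum_(l <- s) ip (phi l) u * et l.
  rewrite -sumrB; apply: ler_sum => l _.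
  rewrite mulrBl lerD2l lerN2; apply: le_trans (ler_norm _) _.
  by rewrite normrM mulrC.
lra.
Qed.

Lemma norm_off_Omega_le sO u : uniq sO -> (forall l, Om l <-> l \in sO) ->
  wl u \is a fin_num ->
  `|(u - us) - coord_proj ip phi sO (u - us)| <=
  inv_mgap ip phi kappa eta * (fine (wl u) - fine (wl us) - ip eta (u - us)).
Proof.
move=> usO memO fu; set h := u - us.
apply: (norm_le_sum_coord hip onb) => s us'.
rewrite (eq_bigr (fun l => if l \notin sO then `|ip (phi l) u| else 0)); last first.
  move=> l _; rewrite (ipBr hip) (ip_phi_coord_proj hip onb) //.
  case: (boolP (l \in sO)) => lO /=; first by rewrite subrr normr0.
  rewrite subr0 /h (ipBr hip) coord_off_Omega ?subr0 //.
  by move=> /memO; rewrite (negbTE lO).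
rewrite -big_mkcond /= -big_filter; set s' := [seq l <- s | l \notin sO].
have ns' l : l \in s' -> ~ Om l.
  by rewrite mem_filter => /andP[nl _] /memO; rewrite (negbTE nl).
have hD := bregman_wl1_ge_gap (filter_uniq _ us') ns' fu.
rewrite /inv_mgap; case: pselect => [ex|nex]; last first.
  rewrite mul0r big1_seq // => l /andP[_ ls]; exfalso; apply: nex.
  by exists l; apply: ns'.
have m0 := mgap_gt0 ex.
rewrite div1r -[leLHS](mulKf (lt0r_neq0 m0)).
apply: ler_wpM2l; first by rewrite invr_ge0 ltW.
apply: le_trans hD; rewrite mulr_sumr big_seq [leRHS]big_seq.
by apply: ler_sum => l ls; apply: ler_wpM2r => //; apply: mgap_le; apply: ns'.
Qed.

End WeightedL1Subgradient.

Lemma completed_square_bound (R : realFieldType) (al de n r D : R) :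
  0 <= al -> 0 <= de -> 0 <= n -> 0 <= D ->
  2^-1 * r ^+ 2 + al * D <= 2^-1 * de ^+ 2 + al * n * (r + de) ->
  al * D <= 2^-1 * (de + al * n) ^+ 2 /\ r <= de + 2 * al * n.
Proof.
move=> al0 de0 n0 D0 h.
have sq : 2^-1 * (r - al * n) ^+ 2 + al * D <= 2^-1 * (de + al * n) ^+ 2.
  move: h; rewrite !sqrrD; lra.
split; first by have := sqr_ge0 (r - al * n); lra.
have alD := mulr_ge0 al0 D0.
have : (r - al * n) ^+ 2 <= (de + al * n) ^+ 2 by lra.
have s0 : 0 <= de + al * n by rewrite addr_ge0 ?mulr_ge0.
have [rn|rn] := lerP (r - al * n) 0; first lra.
by rewrite ler_pXn2r ?nnegrE ?(ltW rn) //; lra.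
Qed.

Lemma fin_num_scaled_le (R : realType) (x y k : R) (e : \bar R) :
  0 < k -> (0 <= e)%E -> (x%:E + k%:E * e <= y%:E)%E -> e \is a fin_num.
Proof. by move=> k0; case: e => // _; rewrite mulry gtr0_sg // mul1e addey. Qed.

Lemma fin_num_adde_lt (R : realType) (e1 e2 : \bar R) : (0 <= e1)%E -> (0 <= e2)%E ->
  (e1 + e2 < +oo)%E -> e1 \is a fin_num /\ e2 \is a fin_num.
Proof. by case: e1 => [r1| |] //; case: e2 => [r2| |]. Qed.

Lemma subdiff_fine_le (R : realType) (V : normedModType R) (ip : V -> V -> R)
  (F : V -> \bar R) x0 xi z : subdiff ip F x0 xi ->
  F x0 \is a fin_num -> F z \is a fin_num ->
  fine (F x0) + ip xi (z - x0) <= fine (F z).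
Proof. by move=> /(_ z); rewrite -lee_fin EFinD => + /fineK -> /fineK ->. Qed.

Section StabilityOnOmega.
Variables (R : realType) (H : completeNormedModType R) (Y : normedModType R).
Variables (ipH : H -> H -> R) (ipY : Y -> Y -> R).
Hypotheses (hipH : is_inner_product ipH) (hipY : is_inner_product ipY).
Variables (L : countType) (phi : L -> H).
Hypothesis onb : orthonormal_basis ipH phi.
Variables (kappa : L -> R) (a : R).
Hypotheses (a_gt0 : 0 < a) (kappa_ge : forall l, a <= kappa l).
Variables (A : {linear H -> Y}) (us eta : H).
Hypotheses (Acont : continuous A) (hsub : subdiff ipH (wl1 ipH phi kappa) us eta).
Hypothesis Ainj : injective_on A (span_of phi (Omega ipH phi kappa eta)).
Local Notation wl := (wl1 ipH phi kappa).
Local Notation SO := (span_of phi (Omega ipH phi kappa eta)).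
Local Notation im := (inv_mgap ipH phi kappa eta).
Local Notation bregman_wl u := (fine (wl u) - fine (wl us) - ipH eta (u - us)).

(* Split u - us into its part on H_Omega, where A is boundedly invertible,
   and its part off Omega, controlled by the Bregman distance. *)
Lemma norm_le_bregman_wl1 u : wl u \is a fin_num ->
  `|u - us| <= inv_opnorm A SO * (`|A (u - us)| + opnorm A * (im * bregman_wl u))
               + im * bregman_wl u.
Proof.
move=> fu; set D := bregman_wl u; set h := u - us.
have [sO [usO memO]] := Omega_seq hipH onb a_gt0 kappa_ge eta.
set p := coord_proj ipH phi sO h.
have hg : `|h - p| <= im * D :=
  norm_off_Omega_le hipH onb a_gt0 kappa_ge hsub usO memO fu.
have sp : SO p by exists sO, (fun l => ipH (phi l) h); split => // l /memO.
have Ap : `|A p| <= `|A h| + opnorm A * (im * D).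
  have -> : p = h - (h - p) by rewrite opprB addrCA subrr addr0.
  rewrite linearB; apply: le_trans (ler_normB _ _) _.
  rewrite lerD2l; apply: le_trans (normr_le_opnorm Acont _) _.
  by rewrite ler_wpM2l ?opnorm_ge0.
have split_h : `|h| <= `|p| + `|h - p| by rewrite -{1}(subrK p h) addrC ler_normD.
apply: le_trans split_h _; apply: lerD hg.
apply: le_trans (normr_le_inv_opnorm hipH hipY onb usO memO Ainj sp) _.
by rewrite ler_wpM2l ?(inv_opnorm_ge0 hipH hipY onb usO memO Ainj).
Qed.

End StabilityOnOmega.

Section TikhonovSourceCondition.
Variables (R : realType) (X Y : normedModType R) (H : completeNormedModType R).
Variables (ipX : X -> X -> R) (ipH : H -> H -> R) (ipY : Y -> Y -> R).
Hypotheses (hipX : is_inner_product ipX) (hipH : is_inner_product ipH)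
  (hipY : is_inner_product ipY).
Variables (W : {linear X -> H}) (A : {linear H -> Y}) (Wt : H -> X) (At : Y -> H).
Hypotheses (Acont : continuous A)
  (hWt : is_adjoint ipX ipH W Wt) (hAt : is_adjoint ipH ipY A At).
Variable Reg : X -> \bar R.
Hypotheses (Reg_ge0 : forall x, (0 <= Reg x)%E) (Reg_proper : proper_fun Reg).
Variables (L : countType) (phi : L -> H) (kappa : L -> R) (a : R).
Hypotheses (onb : orthonormal_basis ipH phi)
  (a_gt0 : 0 < a) (kappa_ge : forall l, a <= kappa l).
Local Notation wl := (wl1 ipH phi kappa).
Variables (xs : X) (nu : Y) (xi : X) (eta : H).
Hypotheses (xi_sub : subdiff ipX Reg xs xi) (eta_sub : subdiff ipH wl (W xs) eta)
  (source : Wt (At nu) = xi + Wt eta)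
  (Ainj : injective_on A (span_of phi (Omega ipH phi kappa eta))).
Variables (C delta : R) (yd : Y) (xad : X).
Hypotheses (C_gt0 : 0 < C) (delta_gt0 : 0 < delta)
  (noise : `|yd - A (W xs)| <= delta).
Hypothesis xad_min : forall x : X,
  (((2%:R)^-1 * `|A (W xad) - yd| ^+ 2)%:E + (C * delta)%:E * (Reg xad + wl (W xad))
   <= ((2%:R)^-1 * `|A (W x) - yd| ^+ 2)%:E + (C * delta)%:E * (Reg x + wl (W x)))%E.

Local Notation DR :=
  (fine (Reg xad) - fine (Reg xs) - ipX xi (xad - xs)).
Local Notation Dwl :=
  (fine (wl (W xad)) - fine (wl (W xs)) - ipH eta (W xad - W xs)).

Lemma Reg_xs_fin : Reg xs \is a fin_num.
Proof.
have [[z Rz] _] := Reg_proper; move: (xi_sub z) (Reg_ge0 xs) (Reg_ge0 z) Rz.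
by case: (Reg z) => // r; case: (Reg xs).
Qed.

Lemma wl_xs_fin : wl (W xs) \is a fin_num.
Proof. exact: (@subdiff_wl1_fin _ _ _ hipH _ phi kappa a a_gt0 kappa_ge _ _ eta_sub). Qed.

Lemma minimizer_fin : Reg xad \is a fin_num /\ wl (W xad) \is a fin_num.
Proof.
have wl_ge0 := wl1_ge0 ipH phi a_gt0 kappa_ge.
have : (Reg xad + wl (W xad)) \is a fin_num.
  apply: (@fin_num_scaled_le _ (2^-1 * `|A (W xad) - yd| ^+ 2)
    (2^-1 * `|A (W xs) - yd| ^+ 2 + C * delta * (fine (Reg xs) + fine (wl (W xs))))
    (C * delta)); rewrite ?mulr_gt0 ?adde_ge0 //.
  by move: (xad_min xs); rewrite -(fineK Reg_xs_fin) -(fineK wl_xs_fin).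
rewrite fin_numElt => /andP[_]; exact: fin_num_adde_lt.
Qed.

Lemma bregman_parts_ge0 : 0 <= DR /\ 0 <= Dwl.
Proof.
have [fRx fWx] := minimizer_fin.
have := subdiff_fine_le xi_sub Reg_xs_fin fRx.
have := subdiff_fine_le eta_sub wl_xs_fin fWx.
by split; lra.
Qed.

Lemma source_identity :
  ipX xi (xad - xs) + ipH eta (W xad - W xs) = ipY (A (W xad) - A (W xs)) nu.
Proof.
have <- : ipX (Wt (At nu)) (xad - xs) = ipY (A (W xad) - A (W xs)) nu.
  by rewrite (ip_sym hipX) -hWt -hAt !linearB.
by rewrite source (ipDl hipX) (ip_sym hipX (Wt eta)) -hWt linearB (ip_sym hipH).
Qed.

(* Minimality of xad against xs, with the source identity turning the penalty
   increase into the two Bregman distances plus a term <A W (xad - xs), nu>. *)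
Lemma bregman_residual_le :
  DR + Dwl <= (1 + C * `|nu|) ^+ 2 / (2 * C) * delta /\
  `|A (W xad) - yd| <= delta + 2 * (C * delta) * `|nu|.
Proof.
have [fRx fWx] := minimizer_fin; have [DR0 Dwl0] := bregman_parts_ge0.
set r := `|A (W xad) - yd|; set al := C * delta.
have al0 : 0 < al by rewrite mulr_gt0.
have opt : 2^-1 * r ^+ 2 + al * (fine (Reg xad) + fine (wl (W xad))) <=
           2^-1 * `|A (W xs) - yd| ^+ 2 + al * (fine (Reg xs) + fine (wl (W xs))).
  move: (xad_min xs).
  by rewrite -(fineK Reg_xs_fin) -(fineK wl_xs_fin) -(fineK fRx) -(fineK fWx).
have noise2 : `|A (W xs) - yd| ^+ 2 <= delta ^+ 2.
  by rewrite distrC ler_pXn2r ?nnegrE ?(ltW delta_gt0).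
have cs : - (`|nu| * (r + delta)) <= ipY (A (W xad) - A (W xs)) nu.
  suff /andP[] : - (`|nu| * (r + delta)) <= ipY (A (W xad) - A (W xs)) nu
                   <= `|nu| * (r + delta) by [].
  rewrite -ler_norml; apply: le_trans (cauchy_schwarz hipY _ _) _.
  rewrite mulrC ler_wpM2l // -[A (W xad)](subrK yd) -addrA.
  by apply: le_trans (ler_normD _ _) _; rewrite /r lerD2l.
have key : 2^-1 * r ^+ 2 + al * (DR + Dwl) <=
           2^-1 * delta ^+ 2 + al * `|nu| * (r + delta).
  have := congr1 ( *%R al) source_identity; have := ler_wpM2l (ltW al0) cs; lra.
have [bD ->] := completed_square_bound (ltW al0) (ltW delta_gt0) (normr_ge0 nu)
  (addr_ge0 DR0 Dwl0) key.
split => //; rewrite -(ler_pM2l al0); apply: le_trans bD _.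
by rewrite le_eqVlt; apply/orP; left; apply/eqP; rewrite /al; field; rewrite gt_eqF.
Qed.

Lemma tikhonov_bregman_le :
  (bregman ipX Reg xi xad xs <= ((1 + C * `|nu|) ^+ 2 / (2 * C) * delta)%:E)%E.
Proof.
have [fRx _] := minimizer_fin; have [_ Dwl0] := bregman_parts_ge0.
have [hsum _] := bregman_residual_le.
by rewrite /bregman -(fineK fRx) -(fineK Reg_xs_fin) -!EFinB lee_fin; lra.
Qed.

Local Notation c := ((1 + C * `|nu|) ^+ 2 / (2 * C)).
Local Notation nA := (inv_opnorm A (span_of phi (Omega ipH phi kappa eta))).
Local Notation im := (inv_mgap ipH phi kappa eta).

Lemma tikhonov_error_le : `|W xad - W xs| <=
  (2 * nA * (1 + C * `|nu|) + (1 + nA * opnorm A) * im * c) * delta.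
Proof.
have [_ fWx] := minimizer_fin; have [DR0 Dwl0] := bregman_parts_ge0.
have [hsum hres] := bregman_residual_le.
have [sO [usO memO]] := Omega_seq hipH onb a_gt0 kappa_ge eta.
have nA0 := inv_opnorm_ge0 hipH hipY onb usO memO Ainj.
have im0 := inv_mgap_ge0 hipH onb a_gt0 kappa_ge eta_sub.
have hA : `|A (W xad - W xs)| <= 2 * (1 + C * `|nu|) * delta.
  rewrite linearB -[A (W xad)](subrK yd) -addrA.
  apply: le_trans (ler_normD _ _) _; move: noise; rewrite distrC; lra.
have hD : im * Dwl <= im * (c * delta) by rewrite ler_wpM2l //; lra.
have hAD := lerD hA (ler_wpM2l (opnorm_ge0 Acont) hD).
apply: le_trans
  (norm_le_bregman_wl1 hipH hipY onb a_gt0 kappa_ge Acont eta_sub Ainj fWx) _.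
apply: le_trans (lerD (ler_wpM2l nA0 hAD) hD) _.
by rewrite le_eqVlt; apply/orP; left; apply/eqP; ring.
Qed.

End TikhonovSourceCondition.

Theorem mainTheorem2 (R : realType)
  (X H Y : completeNormedModType R)
  (ipX : X -> X -> R) (ipH : H -> H -> R) (ipY : Y -> Y -> R)
  (hipX : is_inner_product ipX) (hipH : is_inner_product ipH)
  (hipY : is_inner_product ipY)
  (sepX : separable X) (sepH : separable H) (sepY : separable Y)
  (W : {linear X -> H}) (A : {linear H -> Y})
  (Wcont : continuous W) (Acont : continuous A)
  (Wt : H -> X) (At : Y -> H)
  (hWt : is_adjoint ipX ipH W Wt) (hAt : is_adjoint ipH ipY A At)
  (Reg : X -> \bar R)
  (Reg_ge0 : forall x, (0 <= Reg x)%E)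
  (Reg_proper : proper_fun Reg) (Reg_convex : convex_fun Reg)
  (Reg_wlsc : weakly_lsc ipX Reg)
  (L : countType) (phi : L -> H) (onb : orthonormal_basis ipH phi)
  (kappa : L -> R) (a : R) (a_gt0 : 0 < a) (kappa_ge : forall l, a <= kappa l)
  (dom_nonempty : exists x, (Reg x + wl1 ipH phi kappa (W x) < +oo)%E)
  (xs : X) (ys : Y) (nu : Y) (xi : X) (eta : H)
  (h21 : A (W xs) = ys)
  (h22 : subdiff ipX (fun x => Reg x + wl1 ipH phi kappa (W x))%E xs (Wt (At nu)))
  (h23a : subdiff ipX Reg xs xi)
  (h23b : subdiff ipH (wl1 ipH phi kappa) (W xs) eta)
  (h23c : Wt (At nu) = xi + Wt eta)
  (h24 : injective_on A (span_of phi (Omega ipH phi kappa eta)))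
  (C : R) (C_gt0 : 0 < C) :
  let c := (1 + C * `|nu|) ^+ 2 / (2 * C) in
  let nA := inv_opnorm A (span_of phi (Omega ipH phi kappa eta)) in
  let d := 2 * nA * (1 + C * `|nu|)
           + (1 + nA * opnorm A) * inv_mgap ipH phi kappa eta * c in
  forall (delta : R) (ydelta : Y) (xad : X),
    0 < delta -> `|ydelta - ys| <= delta ->
    (forall x : X,
       (((2%:R)^-1 * `|A (W xad) - ydelta| ^+ 2)%:E
          + (C * delta)%:E * (Reg xad + wl1 ipH phi kappa (W xad))
        <= ((2%:R)^-1 * `|A (W x) - ydelta| ^+ 2)%:E
          + (C * delta)%:E * (Reg x + wl1 ipH phi kappa (W x)))%E) ->
    (bregman ipX Reg xi xad xs <= (c * delta)%:E)%E /\
    `|W xad - W xs| <= d * delta.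
Proof.
move=> c nA d delta yd xad delta_gt0 noise xad_min; subst ys.
split.
- exact: (tikhonov_bregman_le hipX hipH hipY hWt hAt Reg_ge0 Reg_proper a_gt0 kappa_ge
    h23a h23b h23c C_gt0 delta_gt0 noise xad_min).
- exact: (tikhonov_error_le hipX hipH hipY Acont hWt hAt Reg_ge0 Reg_proper onb a_gt0
    kappa_ge h23a h23b h23c h24 C_gt0 delta_gt0 noise xad_min).
Qed.
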